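(* Let $T_{init}$ be the number of nodes of the initial tree. The expected optimization time of (1+1) GP-single on MO-WORDER is $O(T_{init}+n\log n)$.
   Context: Fix an integer $n\ge 1$ and real weights $w_1\ge w_2\ge\dots\ge w_n>0$. The terminal set is $T=\{x_1,\bar x_1,\dots,x_n,\bar x_n\}$ ($\bar x_i$ is the complement of $x_i$; $x_i$ is called positive). A syntax tree is either the empty tree or a rooted ordered binary tree whose inner nodes are all labelled by the binary function $J$ (join, exactly two ordered children) and whose leaves are labelled by elements of $T$. The complexity $C(X)$ is the number of nodes of $X$ (0 for the empty tree). The leaf list $l$ of $X$ is the sequence of leaf labels in an inorder traversal. WORDER: build a list $S$ by scanning $l$ from front to rear and appending a literal only if neither it nor its complement is already in $S$; WORDER$(X)=\sum_{i:\,x_i\in S} w_i$. MO-WORDER$(X)=(\mathrm{WORDER}(X),C(X))$, WORDER to be maximized and $C$ minimized. Mutation (HVL-Prime applied $k$ times): each application chooses uniformly at random one of three operations. Substitute: replace a uniformly random leaf by a uniformly random $u\in T$. Insert: choose a uniformly random node $v$ and uniformly random $u\in T$, replace $v$ by a $J$-node with children $u$ and $v$ in uniformly random order (inserting into the empty tree yields the single leaf $u$). Delete: choose a uniformly random leaf $v$ with parent $p$ and sibling $u$, replace $p$ by $u$ (deleting $p$ and $v$; deleting the only leaf of a one-leaf tree yields the empty tree). Single-operation mutation uses $k=1$. (1+1) GP-single on MO-$F$: start with an initial tree $X$; in each iteration let $Y$ be $X$ mutated with $k=1$, and set $X:=Y$ iff $F(Y)>F(X)$, or $F(Y)=F(X)$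 and $C(Y)\le C(X)$. Expected optimization time: expected number of iterations (fitness evaluations) until the current solution is for the first time optimal, i.e. has maximum possible $F$-value and, among such trees, minimum complexity. *)

From Stdlib Require Import Reals Lra Lia Arith List Bool ClassicalEpsilon.
Import ListNotations.
Open Scope R_scope.

(* Variables are indexed 0..n-1 (paper: 1..n).  A literal (i, true) is x_{i+1},
   (i, false) is its complement. *)
Definition lit := (nat * bool)%type.

Inductive tree : Type :=
| Leaf : lit -> tree
| Join : tree -> tree -> tree.

(* A possibly empty syntax tree: None is the empty tree. *)
Definition stree := option tree.

Fixpoint tsize (t : tree) : nat :=
  match t with Leaf _ => 1 | Join a b => S (tsize a + tsize b) end.

Definition cplx (X : stree) : nat :=
  match X with None => 0 | Some t => tsize t end.

Fixpoint nleaves (t : tree) : nat :=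
  match t with Leaf _ => 1 | Join a b => (nleaves a + nleaves b)%nat end.

Fixpoint leaves (t : tree) : list lit :=
  match t with Leaf l => [l] | Join a b => leaves a ++ leaves b end.

Definition leaf_list (X : stree) : list lit :=
  match X with None => [] | Some t => leaves t end.

Definition wf (n : nat) (X : stree) : Prop :=
  forall l, In l (leaf_list X) -> (fst l < n)%nat.

(* WORDER: scan the leaf list; the first literal of each variable decides *)
Fixpoint worder_scan (w : nat -> R) (seen : list nat) (l : list lit) : R :=
  match l with
  | [] => 0
  | (i, b) :: r =>
      if existsb (Nat.eqb i) seen then worder_scan w seen r
      else (if b then w i else 0) + worder_scan w (i :: seen) r
  end.

Definition WORDER (w : nat -> R) (X : stree) : R := worder_scan w [] (leaf_list X).

Definition terminals (n : nat) : list lit :=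
  flat_map (fun i => [(i, true); (i, false)]) (seq 0 n).

(* replace the j-th leaf (inorder, 0-based) by u *)
Fixpoint replace_leaf (t : tree) (j : nat) (u : lit) : tree :=
  match t with
  | Leaf _ => Leaf u
  | Join a b =>
      if Nat.ltb j (nleaves a) then Join (replace_leaf a j u) b
      else Join a (replace_leaf b (j - nleaves a) u)
  end.

(* insert at the k-th node (preorder, 0-based): the node v is replaced by
   J(u, v) if first = true, else by J(v, u) *)
Fixpoint insert_at (t : tree) (k : nat) (u : lit) (first : bool) : tree :=
  match k with
  | O => if first then Join (Leaf u) t else Join t (Leaf u)
  | S k' =>
      match t with
      | Leaf _ => if first then Join (Leaf u) t else Join t (Leaf u) (* unreachable for k < size *)
      | Join a b =>
          if Nat.ltb k' (tsize a) then Join (insert_at a k' u first) b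
          else Join a (insert_at b (k' - tsize a) u first)
      end
  end.

Fixpoint delete_leaf (t : tree) (j : nat) : option tree :=
  match t with
  | Leaf _ => None
  | Join a b =>
      if Nat.ltb j (nleaves a) then
        match delete_leaf a j with
        | None => Some b
        | Some a' => Some (Join a' b)
        end
      else
        match delete_leaf b (j - nleaves a) with
        | None => Some a
        | Some b' => Some (Join a b')
        end
  end.

(* finitely supported distributions: lists of (probability, outcome) *)
Definition dist := list (R * stree).

Definition scale (p : R) (d : dist) : dist := map (fun q => (p * fst q, snd q)) d.

Definition substitute_dist (n : nat) (X : stree) : dist :=
  match X with
  | None => [(1, None)]
  | Some t =>
      flat_map (fun j =>
        map (fun u => (/ (INR (nleaves t) * INR (2 * n)), Some (replace_leaf t j u)))
            (terminals n))
        (seq 0 (nleaves t))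
  end.

Definition insert_dist (n : nat) (X : stree) : dist :=
  match X with
  | None => map (fun u => (/ INR (2 * n), Some (Leaf u))) (terminals n)
  | Some t =>
      flat_map (fun k =>
        flat_map (fun u =>
          map (fun b => (/ (INR (tsize t) * INR (2 * n) * 2), Some (insert_at t k u b)))
              [true; false])
          (terminals n))
        (seq 0 (tsize t))
  end.

Definition delete_dist (X : stree) : dist :=
  match X with
  | None => [(1, None)]
  | Some t => map (fun j => (/ INR (nleaves t), delete_leaf t j)) (seq 0 (nleaves t))
  end.

(* HVL-Prime with k = 1 *)
Definition mutate_dist (n : nat) (X : stree) : dist :=
  scale (/3) (substitute_dist n X) ++ scale (/3) (insert_dist n X)
    ++ scale (/3) (delete_dist X).

Definition select (w : nat -> R) (X Y : stree) : stree :=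
  if Rlt_dec (WORDER w X) (WORDER w Y) then Y
  else if Req_EM_T (WORDER w Y) (WORDER w X) then
         (if Nat.leb (cplx Y) (cplx X) then Y else X)
       else X.

Definition optimal (n : nat) (w : nat -> R) (X : stree) : Prop :=
  (forall Y, wf n Y -> WORDER w Y <= WORDER w X) /\
  (forall Y, wf n Y -> WORDER w Y = WORDER w X -> (cplx X <= cplx Y)%nat).

(* not_opt_prob n w t X = Pr[X_0, ..., X_t all non-optimal], X_0 = X,
   i.e. Pr[T > t] for the optimization time T *)
Fixpoint not_opt_prob (n : nat) (w : nat -> R) (t : nat) (X : stree) : R :=
  if excluded_middle_informative (optimal n w X) then 0
  else match t with
       | O => 1
       | S t' =>
           fold_right (fun q acc => fst q * not_opt_prob n w t' (select w X (snd q)) + acc)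
                      0 (mutate_dist n X)
       end.

(* partial sums sum_{t < N} Pr[T > t]; E[T] is their supremum (limit) *)
Definition expected_time_partial (n : nat) (w : nat -> R) (X : stree) (N : nat) : R :=
  fold_right Rplus 0 (map (fun t => not_opt_prob n w t X) (seq 0 N)).

Definition weights_ok (n : nat) (w : nat -> R) : Prop :=
  (forall i, (S i < n)%nat -> w (S i) <= w i) /\ (forall i, (i < n)%nat -> 0 < w i).

From Stdlib Require Import Reals Lra Lia List ClassicalEpsilon.
Import ListNotations.
Open Scope R_scope.

(** Proof by additive drift.  For a tree [X] let [L(X)] be the length of its
    leaf list and [P(X)] the number of variables whose first occurrence in the
    leaf list is positive ("expressed"); WORDER is the weighted count of these
    variables.  With [h(0) = 0] and [h(m) = 1 + ln m] (so [h(m) - h(m-1) >= 1/m]),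
    the potential
        g(X) = F(L - P) + G(n - P),   F(b) = 3b + 3n h(b),   G(k) = 6n h(k)
    decreases by at least 1 in expectation from every non-optimal tree:
    - accepted mutations never decrease [P] and never increase [L - P]
      (with positive weights, WORDER can only grow if [P] does not drop);
    - if [L > P], at most [P] deletions are harmful, so with probability
      [>= (L-P)/(3L)] a deletion is accepted and lowers [F] by [3 + 3n/(L-P)],
      and [L <= (L-P) + n];
    - if [L = P < n], inserting the positive literal of one of the [n - P]
      unexpressed variables (probability [(n-P)/(6n)]) is accepted and lowers
      [G] by [6n/(n-P)];
    - if [L = P = n] the tree is optimal. *)

Definition lsum {A} (l : list A) (h : A -> R) : R :=
  fold_right (fun x acc => h x + acc) 0 l.

Lemma lsum_app {A} (l1 l2 : list A) h : lsum (l1 ++ l2) h = lsum l1 h + lsum l2 h.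
Proof. induction l1 as [|x l1 IH]; simpl; [lra|]. unfold lsum in *; simpl; rewrite IH; lra. Qed.

Lemma lsum_flat_map {A B} (f : A -> list B) l h :
  lsum (flat_map f l) h = lsum l (fun x => lsum (f x) h).
Proof. induction l as [|x l IH]; simpl; [reflexivity|]. rewrite lsum_app, IH. reflexivity. Qed.

Lemma lsum_map {A B} (f : A -> B) l h : lsum (map f l) h = lsum l (fun x => h (f x)).
Proof. induction l as [|x l IH]; simpl; [reflexivity|]. unfold lsum in *; simpl; rewrite IH; reflexivity. Qed.

Lemma lsum_le {A} (l : list A) h1 h2 :
  (forall x, In x l -> h1 x <= h2 x) -> lsum l h1 <= lsum l h2.
Proof.
  induction l as [|x l IH]; intros H; simpl; [lra|]. unfold lsum in *; simpl.
  assert (h1 x <= h2 x) by (apply H; left; auto).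
  assert (fold_right (fun y acc => h1 y + acc) 0 l <= fold_right (fun y acc => h2 y + acc) 0 l)
    by (apply IH; intros; apply H; right; auto).
  lra.
Qed.

Lemma lsum_ext {A} (l : list A) h1 h2 :
  (forall x, In x l -> h1 x = h2 x) -> lsum l h1 = lsum l h2.
Proof.
  intros H. apply Rle_antisym; apply lsum_le; intros x Hx; rewrite H by auto; lra.
Qed.

Lemma lsum_plus {A} (l : list A) h1 h2 : lsum l (fun x => h1 x + h2 x) = lsum l h1 + lsum l h2.
Proof. induction l as [|x l IH]; simpl; [lra|]. unfold lsum in *; simpl; rewrite IH; lra. Qed.

Lemma lsum_scal {A} (l : list A) c h : lsum l (fun x => c * h x) = c * lsum l h.
Proof. induction l as [|x l IH]; simpl; [lra|]. unfold lsum in *; simpl; rewrite IH; lra. Qed.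

Lemma lsum_const {A} (l : list A) c : lsum l (fun _ => c) = INR (length l) * c.
Proof.
  induction l as [|x l IH]; [simpl; lra|].
  unfold lsum in *; cbn [length fold_right]; rewrite IH, S_INR; lra.
Qed.

Lemma lsum_swap {A B} (l1 : list A) (l2 : list B) h :
  lsum l1 (fun x => lsum l2 (fun y => h x y)) = lsum l2 (fun y => lsum l1 (fun x => h x y)).
Proof.
  induction l1 as [|x l1 IH]; simpl.
  - induction l2 as [|y l2 IH2]; simpl; [reflexivity|]. unfold lsum in *; simpl; rewrite <- IH2; lra.
  - unfold lsum at 1; simpl. fold (lsum l1 (fun x => lsum l2 (fun y => h x y))).
    rewrite IH, lsum_plus. reflexivity.
Qed.

Lemma lsum_seq_S m (f : nat -> R) :
  lsum (seq 0 (S m)) f = f O + lsum (seq 0 m) (fun j => f (S j)).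
Proof.
  rewrite <- cons_seq, <- seq_shift. unfold lsum at 1; simpl.
  fold (lsum (map S (seq 0 m)) f). rewrite lsum_map. reflexivity.
Qed.

Fixpoint sumR (n : nat) (f : nat -> R) : R :=
  match n with O => 0 | S m => sumR m f + f m end.

Lemma lsum_seq_sumR n f : lsum (seq 0 n) f = sumR n f.
Proof.
  induction n as [|n IH]; [reflexivity|]. rewrite seq_S, lsum_app, IH. cbn [sumR].
  unfold lsum; simpl. lra.
Qed.

Lemma sumR_le n f g : (forall v, (v < n)%nat -> f v <= g v) -> sumR n f <= sumR n g.
Proof.
  induction n as [|n IH]; intros H; simpl; [lra|].
  assert (f n <= g n) by (apply H; lia).
  assert (sumR n f <= sumR n g) by (apply IH; intros; apply H; lia).
  lra.
Qed.

Lemma sumR_ext n f g : (forall v, (v < n)%nat -> f v = g v) -> sumR n f = sumR n g.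
Proof. intros H. apply Rle_antisym; apply sumR_le; intros v Hv; rewrite H by auto; lra. Qed.

Lemma sumR_lt n f g i : (i < n)%nat -> (forall v, (v < n)%nat -> f v <= g v) ->
  f i < g i -> sumR n f < sumR n g.
Proof.
  induction n as [|n IH]; intros Hi H Hlt; [lia|]. simpl.
  assert (sumR n f <= sumR n g) by (apply sumR_le; intros; apply H; lia).
  assert (f n <= g n) by (apply H; lia).
  destruct (Nat.eq_dec i n) as [->|Hne]; [lra|].
  assert (sumR n f < sumR n g) by (apply IH; auto; lia). lra.
Qed.

Lemma sumR_point n f g i : (i < n)%nat -> (forall v, v <> i -> f v = g v) ->
  sumR n f = sumR n g + (f i - g i).
Proof.
  induction n as [|n IH]; intros Hi H; [lia|]. simpl.
  destruct (Nat.eq_dec i n) as [->|Hne].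
  - rewrite (sumR_ext n f g); [lra|]. intros; apply H; lia.
  - rewrite IH by (auto; lia). rewrite (H n) by auto. lra.
Qed.

Lemma sumR_plus n f g : sumR n (fun v => f v + g v) = sumR n f + sumR n g.
Proof. induction n as [|n IH]; simpl; [lra|]. rewrite IH; lra. Qed.

Lemma sumR_const n c : sumR n (fun _ => c) = INR n * c.
Proof. induction n as [|n IH]; [simpl; lra|]. cbn [sumR]; rewrite IH, S_INR; lra. Qed.

(** * Syntax trees and their leaf lists *)

Lemma nleaves_len t : nleaves t = length (leaves t).
Proof. induction t; simpl; auto. rewrite length_app; lia. Qed.

Lemma nleaves_pos t : (1 <= nleaves t)%nat.
Proof. induction t; simpl; lia. Qed.

(** A binary tree with [L] leaves has [2L - 1] nodes, so the complexity is a
    function of the length of the leaf list. *)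
Lemma tsize_leaves t : tsize t = (2 * nleaves t - 1)%nat.
Proof. induction t; simpl; auto. pose proof (nleaves_pos t1); pose proof (nleaves_pos t2); lia. Qed.

Lemma cplx_len X : cplx X = (2 * length (leaf_list X) - 1)%nat.
Proof. destruct X; simpl; auto. rewrite tsize_leaves, nleaves_len; auto. Qed.

Lemma replace_split t j u : (j < nleaves t)%nat ->
  exists l1 a l2, leaves t = l1 ++ a :: l2 /\ leaves (replace_leaf t j u) = l1 ++ u :: l2.
Proof.
  revert j; induction t as [l|t1 IH1 t2 IH2]; intros j Hj; simpl.
  - exists [], l, []; auto.
  - simpl in Hj. destruct (Nat.ltb j (nleaves t1)) eqn:E.
    + apply Nat.ltb_lt in E. destruct (IH1 j E) as (l1 & a & l2 & H1 & H2).
      exists l1, a, (l2 ++ leaves t2). simpl. rewrite H1, H2, <- !app_assoc; auto.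
    + apply Nat.ltb_ge in E. destruct (IH2 (j - nleaves t1)%nat) as (l1 & a & l2 & H1 & H2); [lia|].
      exists (leaves t1 ++ l1), a, l2. simpl. rewrite H1, H2, <- !app_assoc; auto.
Qed.

Lemma insert_split t k u first :
  exists l1 l2, leaves t = l1 ++ l2 /\ leaves (insert_at t k u first) = l1 ++ u :: l2.
Proof.
  revert k; induction t as [l|t1 IH1 t2 IH2]; intros k.
  - destruct k, first; simpl.
    all: first [solve [exists [], [l]; auto] | solve [exists [l], []; auto]].
  - destruct k as [|k]; simpl.
    + destruct first; simpl.
      * exists [], (leaves t1 ++ leaves t2); auto.
      * exists (leaves t1 ++ leaves t2), []; simpl; rewrite app_nil_r; auto.
    + destruct (Nat.ltb k (tsize t1)).
      * destruct (IH1 k) as (l1 & l2 & H1 & H2). exists l1, (l2 ++ leaves t2); simpl.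
        rewrite H1, H2, <- !app_assoc; auto.
      * destruct (IH2 (k - tsize t1)%nat) as (l1 & l2 & H1 & H2).
        exists (leaves t1 ++ l1), l2; simpl. rewrite H1, H2, <- !app_assoc; auto.
Qed.

Fixpoint remove_nth {A} (j : nat) (L : list A) : list A :=
  match L with
  | [] => []
  | a :: r => match j with O => r | S j' => a :: remove_nth j' r end
  end.

Lemma remove_nth_app_l {A} j (l1 l2 : list A) : (j < length l1)%nat ->
  remove_nth j (l1 ++ l2) = remove_nth j l1 ++ l2.
Proof.
  revert j; induction l1 as [|a l1 IH]; intros j H; simpl in *; [lia|].
  destruct j; auto. simpl. rewrite IH by lia; auto.
Qed.

Lemma remove_nth_app_r {A} j (l1 l2 : list A) : (length l1 <= j)%nat ->
  remove_nth j (l1 ++ l2) = l1 ++ remove_nth (j - length l1) l2.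
Proof.
  revert j; induction l1 as [|a l1 IH]; intros j H; simpl in *; [rewrite Nat.sub_0_r; auto|].
  destruct j; [lia|]. simpl. rewrite IH by lia; auto.
Qed.

Lemma remove_nth_split {A} j (L : list A) : (j < length L)%nat ->
  exists l1 a l2, L = l1 ++ a :: l2 /\ remove_nth j L = l1 ++ l2.
Proof.
  revert j; induction L as [|a L IH]; intros j H; simpl in *; [lia|]. destruct j as [|j].
  - exists [], a, L; auto.
  - destruct (IH j) as (l1 & b & l2 & H1 & H2); [lia|].
    exists (a :: l1), b, l2; simpl; rewrite H2, H1; auto.
Qed.

Lemma delete_leaves t j : (j < nleaves t)%nat ->
  leaf_list (delete_leaf t j) = remove_nth j (leaves t).
Proof.
  revert j; induction t as [l|t1 IH1 t2 IH2]; intros j Hj; simpl in *.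
  - destruct j; [auto|lia].
  - destruct (Nat.ltb j (nleaves t1)) eqn:E.
    + apply Nat.ltb_lt in E. rewrite remove_nth_app_l by (rewrite <- nleaves_len; auto).
      specialize (IH1 j E). destruct (delete_leaf t1 j); simpl in *; rewrite <- IH1; auto.
    + apply Nat.ltb_ge in E. rewrite remove_nth_app_r by (rewrite <- nleaves_len; auto).
      rewrite <- nleaves_len. specialize (IH2 (j - nleaves t1)%nat ltac:(lia)).
      destruct (delete_leaf t2 _); simpl in *; rewrite <- IH2; auto. rewrite app_nil_r; auto.
Qed.

Definition over_vars (n : nat) (L : list lit) : Prop := forall a, In a L -> (fst a < n)%nat.

Lemma over_vars_sub n l1 a l2 u :
  over_vars n (l1 ++ a :: l2) -> (fst u < n)%nat -> over_vars n (l1 ++ u :: l2).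
Proof.
  intros H Hu x Hx. apply in_app_or in Hx. destruct Hx as [Hx|[Hx|Hx]].
  - apply H, in_or_app; auto.
  - subst; auto.
  - apply H, in_or_app; right; right; auto.
Qed.

Lemma over_vars_ins n l1 l2 u :
  over_vars n (l1 ++ l2) -> (fst u < n)%nat -> over_vars n (l1 ++ u :: l2).
Proof.
  intros H Hu x Hx. apply in_app_or in Hx. destruct Hx as [Hx|[Hx|Hx]].
  - apply H, in_or_app; auto.
  - subst; auto.
  - apply H, in_or_app; right; auto.
Qed.

Lemma over_vars_del n l1 a l2 : over_vars n (l1 ++ a :: l2) -> over_vars n (l1 ++ l2).
Proof.
  intros H x Hx. apply in_app_or in Hx. destruct Hx as [Hx|Hx].
  - apply H, in_or_app; auto.
  - apply H, in_or_app; right; right; auto.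
Qed.

Lemma terminals_vars n u : In u (terminals n) -> (fst u < n)%nat.
Proof.
  unfold terminals. intros H. apply in_flat_map in H. destruct H as (i & Hi & Hu).
  apply in_seq in Hi. simpl in Hu. destruct Hu as [<-|[<-|[]]]; simpl; lia.
Qed.

Lemma lsum_terminals n (h : lit -> R) :
  lsum (terminals n) h = lsum (seq 0 n) (fun i => h (i, true) + h (i, false)).
Proof. unfold terminals. rewrite lsum_flat_map. apply lsum_ext. intros. unfold lsum; simpl. lra. Qed.

Lemma lsum_terminals_const n c : lsum (terminals n) (fun _ => c) = 2 * INR n * c.
Proof. rewrite lsum_terminals, lsum_const, length_seq. lra. Qed.

(** * First-occurrence semantics of WORDER *)

Definition mem (x : nat) (s : list nat) : bool := existsb (Nat.eqb x) s.

Lemma mem_In x s : mem x s = true <-> In x s.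
Proof.
  unfold mem. rewrite existsb_exists. split.
  - intros (y & Hy & E). apply Nat.eqb_eq in E; subst; auto.
  - intros H; exists x; split; auto; apply Nat.eqb_refl.
Qed.

Fixpoint first_sign (L : list lit) (v : nat) : option bool :=
  match L with
  | [] => None
  | (i, b) :: r => if Nat.eqb i v then Some b else first_sign r v
  end.

(** Variable [v] is expressed by [L] iff its first occurrence is positive;
    these are exactly the variables counted by WORDER. *)
Definition expressed (L : list lit) (v : nat) : bool :=
  match first_sign L v with Some true => true | _ => false end.

Definition b2R (b : bool) : R := if b then 1 else 0.

Fixpoint npos (seen : list nat) (L : list lit) : nat :=
  match L with
  | [] => O
  | (i, b) :: r =>
      if existsb (Nat.eqb i) seen then npos seen r
      else ((if b then 1 else 0) + npos (i :: seen) r)%nat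
  end.

Lemma worder_scan_sum n w seen L : over_vars n L ->
  worder_scan w seen L =
  sumR n (fun v => if mem v seen then 0 else w v * b2R (expressed L v)).
Proof.
  revert seen; induction L as [|[i b] r IH]; intros seen HL.
  - simpl. rewrite (sumR_ext n _ (fun _ => 0)).
    + rewrite sumR_const; lra.
    + intros v _. unfold expressed; simpl. destruct (mem v seen); simpl; lra.
  - assert (Hi : (i < n)%nat) by (apply (HL (i, b)); left; auto).
    assert (Hr : over_vars n r) by (intros a Ha; apply HL; right; auto).
    simpl. rewrite IH by auto. destruct (existsb (Nat.eqb i) seen) eqn:E.
    + apply sumR_ext. intros v _.
      unfold expressed; simpl. destruct (Nat.eqb i v) eqn:E2; auto.
      apply Nat.eqb_eq in E2; subst. unfold mem; rewrite E; auto.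
    + rewrite (IH (i :: seen)) by auto. symmetry.
      rewrite (sumR_point n _
                (fun v => if mem v (i :: seen) then 0 else w v * b2R (expressed r v)) i Hi).
      * assert (Hi1 : mem i (i :: seen) = true) by (apply mem_In; left; auto).
        change (mem i seen = false) in E. rewrite Hi1, E.
        unfold expressed; simpl. rewrite Nat.eqb_refl. destruct b; simpl; lra.
      * intros v Hv. unfold mem; simpl.
        rewrite (proj2 (Nat.eqb_neq v i)) by auto. simpl.
        unfold expressed; simpl. rewrite (proj2 (Nat.eqb_neq i v)) by auto. auto.
Qed.

Lemma worder_sum n w L : over_vars n L ->
  worder_scan w [] L = sumR n (fun v => w v * b2R (expressed L v)).
Proof. intros H. rewrite (worder_scan_sum n) by auto. apply sumR_ext; intros; simpl. auto. Qed.

Lemma npos_INR seen L : INR (npos seen L) = worder_scan (fun _ => 1) seen L.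
Proof.
  revert seen; induction L as [|[i b] r IH]; intros seen; simpl; auto.
  destruct (existsb (Nat.eqb i) seen); auto. rewrite plus_INR, IH. destruct b; simpl; lra.
Qed.

Lemma npos_sum n L : over_vars n L -> INR (npos [] L) = sumR n (fun v => b2R (expressed L v)).
Proof. intros H. rewrite npos_INR, (worder_sum n) by auto. apply sumR_ext; intros; lra. Qed.

Lemma npos_le_length seen L : (npos seen L <= length L)%nat.
Proof.
  revert seen; induction L as [|[i b] r IH]; intros seen; simpl; auto.
  destruct (existsb (Nat.eqb i) seen).
  - specialize (IH seen); lia.
  - specialize (IH (i :: seen)); destruct b; lia.
Qed.

Lemma npos_le_n n L : over_vars n L -> (npos [] L <= n)%nat.
Proof.
  intros H. apply INR_le. rewrite (npos_sum n) by auto.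
  rewrite <- (Rmult_1_r (INR n)), <- sumR_const.
  apply sumR_le; intros v _; unfold b2R; destruct (expressed L v); lra.
Qed.

Lemma npos_antimono s1 s2 L : (forall x, In x s1 -> In x s2) -> (npos s2 L <= npos s1 L)%nat.
Proof.
  revert s1 s2; induction L as [|[i b] r IH]; intros s1 s2 Hs; simpl; auto.
  destruct (existsb (Nat.eqb i) s1) eqn:E1.
  - assert (E2 : existsb (Nat.eqb i) s2 = true).
    { change (mem i s2 = true). apply mem_In, Hs, mem_In. exact E1. }
    rewrite E2. apply IH; auto.
  - destruct (existsb (Nat.eqb i) s2) eqn:E2.
    + assert (npos s2 r <= npos (i :: s1) r)%nat.
      { apply IH. intros x [Hx|Hx]; [subst; apply mem_In; exact E2| auto]. }
      lia.
    + assert (npos (i :: s2) r <= npos (i :: s1) r)%nat.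
      { apply IH. intros x [Hx|Hx]; [left; auto| right; auto]. }
      lia.
Qed.

Lemma npos_full seen L : npos seen L = length L ->
  forall v, mem v seen = false -> first_sign L v <> Some false.
Proof.
  revert seen; induction L as [|[i b] r IH]; intros seen H v Hv; simpl in *; [discriminate|].
  destruct (existsb (Nat.eqb i) seen) eqn:E.
  - pose proof (npos_le_length seen r); lia.
  - pose proof (npos_le_length (i :: seen) r).
    destruct b; [|lia].
    destruct (Nat.eqb i v) eqn:E2; [discriminate|].
    apply (IH (i :: seen)); [lia|]. unfold mem; simpl.
    rewrite Nat.eqb_sym, E2. exact Hv.
Qed.

Lemma first_sign_app l1 l2 v :
  first_sign (l1 ++ l2) v = match first_sign l1 v with Some s => Some s | None => first_sign l2 v end.
Proof. induction l1 as [|[i b] r IH]; simpl; auto. destruct (Nat.eqb i v); auto. Qed.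

Lemma expressed_edit l1 l2 m1 m2 v :
  first_sign m1 v = first_sign m2 v -> expressed (l1 ++ m1 ++ l2) v = expressed (l1 ++ m2 ++ l2) v.
Proof. intros H. unfold expressed. rewrite !first_sign_app, H. auto. Qed.

Lemma worder_local n w (LX LY : list lit) i j :
  over_vars n LX -> over_vars n LY -> (i < n)%nat -> (j < n)%nat ->
  (forall v, v <> i -> v <> j -> expressed LY v = expressed LX v) ->
  worder_scan w [] LY = worder_scan w [] LX
     + w i * (b2R (expressed LY i) - b2R (expressed LX i))
     + (if Nat.eqb i j then 0 else w j * (b2R (expressed LY j) - b2R (expressed LX j))).
Proof.
  intros HX HY Hi Hj Hag. rewrite !(worder_sum n) by auto.
  destruct (Nat.eqb i j) eqn:E.
  - apply Nat.eqb_eq in E; subst.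
    rewrite (sumR_point n _ (fun v => w v * b2R (expressed LX v)) j Hj); [lra|].
    intros v Hv; rewrite Hag; auto.
  - apply Nat.eqb_neq in E.
    set (mid := fun v => if Nat.eqb v j then w j * b2R (expressed LX j)
                         else w v * b2R (expressed LY v)).
    rewrite (sumR_point n _ mid j Hj).
    + rewrite (sumR_point n mid (fun v => w v * b2R (expressed LX v)) i Hi).
      * unfold mid. rewrite Nat.eqb_refl, (proj2 (Nat.eqb_neq i j)) by auto. lra.
      * intros v Hv. unfold mid. destruct (Nat.eqb v j) eqn:E2.
        -- apply Nat.eqb_eq in E2; subst; auto.
        -- rewrite Hag; auto. apply Nat.eqb_neq; auto.
    + intros v Hv. unfold mid. rewrite (proj2 (Nat.eqb_neq v j)) by auto. auto.
Qed.

(** * Selection and the acceptance of local edits *)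

Lemma select_cases w X Y :
  select w X Y = X \/
  (select w X Y = Y /\ (WORDER w X < WORDER w Y \/
                        (WORDER w Y = WORDER w X /\ (cplx Y <= cplx X)%nat))).
Proof.
  unfold select. destruct (Rlt_dec (WORDER w X) (WORDER w Y)); [right; auto|].
  destruct (Req_EM_T (WORDER w Y) (WORDER w X)); [|left; auto].
  destruct (Nat.leb (cplx Y) (cplx X)) eqn:E; [|left; auto].
  right; split; auto. right; split; auto. apply Nat.leb_le; auto.
Qed.

Lemma select_self w X : select w X X = X.
Proof. destruct (select_cases w X X) as [H|[H _]]; auto. Qed.

Lemma select_acc w X Y : WORDER w X < WORDER w Y \/
   (WORDER w Y = WORDER w X /\ (cplx Y <= cplx X)%nat) -> select w X Y = Y.
Proof.
  unfold select. intros [H|[H1 H2]].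
  - destruct (Rlt_dec (WORDER w X) (WORDER w Y)); auto; lra.
  - destruct (Rlt_dec (WORDER w X) (WORDER w Y)); auto.
    destruct (Req_EM_T (WORDER w Y) (WORDER w X)); [|contradiction].
    apply Nat.leb_le in H2; rewrite H2; auto.
Qed.

Definition nexpr (X : stree) : nat := npos [] (leaf_list X).
Definition nlit (X : stree) : nat := length (leaf_list X).

Lemma weighted_change_nonneg (wi wj : R) ci cj di dj (same : bool) : 0 < wi -> 0 < wj ->
  0 <= wi * (b2R ci - b2R di) + (if same then 0 else wj * (b2R cj - b2R dj)) ->
  0 <= (b2R ci - b2R di) + (if same then 0 else (b2R cj - b2R dj)).
Proof. intros; destruct ci, cj, di, dj, same; unfold b2R in *; simpl in *; lra. Qed.

Section Acceptance.
Variable n : nat.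
Variable w : nat -> R.
Hypothesis wpos : forall i, (i < n)%nat -> 0 < w i.

Lemma accepted_nexpr_mono X Y i j :
  over_vars n (leaf_list X) -> over_vars n (leaf_list Y) -> (i < n)%nat -> (j < n)%nat ->
  (forall v, v <> i -> v <> j -> expressed (leaf_list Y) v = expressed (leaf_list X) v) ->
  select w X Y = Y -> (nexpr X <= nexpr Y)%nat.
Proof.
  intros HX HY Hi Hj Hag Hs.
  assert (HW : WORDER w X <= WORDER w Y).
  { destruct (select_cases w X Y) as [H|[_ [H|[H _]]]]; try lra.
    rewrite H in Hs; rewrite <- Hs; lra. }
  unfold WORDER in HW. rewrite (worder_local n w (leaf_list X) (leaf_list Y) i j) in HW by auto.
  apply INR_le. unfold nexpr. rewrite !npos_INR, (worder_local n (fun _ => 1) (leaf_list X) (leaf_list Y) i j) by auto.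
  assert (0 <= (b2R (expressed (leaf_list Y) i) - b2R (expressed (leaf_list X) i)) +
     (if Nat.eqb i j then 0
      else (b2R (expressed (leaf_list Y) j) - b2R (expressed (leaf_list X) j)))).
  { apply (weighted_change_nonneg (w i) (w j)); auto. lra. }
  destruct (Nat.eqb i j); lra.
Qed.

Lemma accepted_sub X Y l1 a l2 u : over_vars n (leaf_list X) -> (fst u < n)%nat ->
  leaf_list X = l1 ++ a :: l2 -> leaf_list Y = l1 ++ u :: l2 ->
  select w X Y = Y -> (nexpr X <= nexpr Y)%nat /\ nlit Y = nlit X.
Proof.
  intros HX Hu EX EY Hs. split.
  - assert (Ha : (fst a < n)%nat) by (apply HX; rewrite EX; apply in_or_app; right; left; auto).
    apply (accepted_nexpr_mono X Y (fst u) (fst a)); auto.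
    + rewrite EY. rewrite EX in HX. apply (over_vars_sub n l1 a); auto.
    + intros v H1 H2. rewrite EX, EY.
      apply (expressed_edit l1 l2 [u] [a]). destruct u as [i b], a as [i' b']; simpl in *.
      rewrite (proj2 (Nat.eqb_neq i v)), (proj2 (Nat.eqb_neq i' v)); auto.
  - unfold nlit. rewrite EX, EY, !length_app. auto.
Qed.

Lemma accepted_del X Y l1 a l2 : over_vars n (leaf_list X) ->
  leaf_list X = l1 ++ a :: l2 -> leaf_list Y = l1 ++ l2 ->
  (select w X Y = Y <-> (nexpr X <= nexpr Y)%nat).
Proof.
  intros HX EX EY.
  assert (Ha : (fst a < n)%nat) by (apply HX; rewrite EX; apply in_or_app; right; left; auto).
  assert (HY : over_vars n (leaf_list Y))
    by (rewrite EY; rewrite EX in HX; apply (over_vars_del n l1 a); auto).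
  assert (Hag : forall v, v <> fst a -> v <> fst a ->
            expressed (leaf_list Y) v = expressed (leaf_list X) v).
  { intros v H1 _. rewrite EX, EY. apply (expressed_edit l1 l2 [] [a]).
    destruct a as [i b]; simpl in *. rewrite (proj2 (Nat.eqb_neq i v)); auto. }
  split.
  - apply (accepted_nexpr_mono X Y (fst a) (fst a)); auto.
  - intros HP. apply select_acc.
    pose proof (worder_local n w _ _ (fst a) (fst a) HX HY Ha Ha Hag) as D.
    pose proof (worder_local n (fun _ => 1) _ _ (fst a) (fst a) HX HY Ha Ha Hag) as D1.
    rewrite Nat.eqb_refl in D, D1. unfold nexpr in HP. apply le_INR in HP.
    rewrite !npos_INR in HP.
    assert (Hw := wpos _ Ha). unfold WORDER.
    destruct (expressed (leaf_list Y) (fst a)), (expressed (leaf_list X) (fst a));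
      unfold b2R in *; try (left; lra).
    all: right; split; [lra|].
    all: rewrite !cplx_len, EX, EY, !length_app; simpl; lia.
Qed.

(** Insertion of [u]: if accepted, [P] and [L] both increase by one (a longer
    tree is only accepted for a strictly larger WORDER). *)
Lemma accepted_ins X Y l1 l2 u : over_vars n (leaf_list X) -> (fst u < n)%nat ->
  leaf_list X = l1 ++ l2 -> leaf_list Y = l1 ++ u :: l2 ->
  select w X Y = Y -> nexpr Y = S (nexpr X) /\ nlit Y = S (nlit X).
Proof.
  intros HX Hu EX EY Hs.
  assert (HY : over_vars n (leaf_list Y))
    by (rewrite EY; rewrite EX in HX; apply over_vars_ins; auto).
  assert (Hag : forall v, v <> fst u -> v <> fst u ->
            expressed (leaf_list Y) v = expressed (leaf_list X) v).
  { intros v H1 _. rewrite EX, EY. apply (expressed_edit l1 l2 [u] []).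
    destruct u as [i b]; simpl in *. rewrite (proj2 (Nat.eqb_neq i v)); auto. }
  assert (HL : nlit Y = S (nlit X)) by (unfold nlit; rewrite EX, EY, !length_app; simpl; lia).
  split; auto.
  pose proof (worder_local n w _ _ (fst u) (fst u) HX HY Hu Hu Hag) as D.
  pose proof (worder_local n (fun _ => 1) _ _ (fst u) (fst u) HX HY Hu Hu Hag) as D1.
  rewrite Nat.eqb_refl in D, D1. rewrite <- !npos_INR in D1. assert (Hw := wpos _ Hu).
  destruct (select_cases w X Y) as [H|[_ [H|[H1 H2]]]].
  - rewrite H in Hs. rewrite Hs in HL. lia.
  - unfold WORDER in H. unfold nexpr. apply INR_eq. rewrite S_INR.
    destruct (expressed (leaf_list Y) (fst u)), (expressed (leaf_list X) (fst u));
      unfold b2R in *; lra.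
  - exfalso. rewrite !cplx_len in H2. unfold nlit in HL. lia.
Qed.

Lemma ins_missing_accepted X Y l1 l2 i : over_vars n (leaf_list X) -> (i < n)%nat ->
  leaf_list X = l1 ++ l2 -> leaf_list Y = l1 ++ (i, true) :: l2 ->
  expressed (leaf_list X) i = false -> nexpr X = nlit X -> select w X Y = Y.
Proof.
  intros HX Hi EX EY Hc Hfull.
  assert (HY : over_vars n (leaf_list Y))
    by (rewrite EY; rewrite EX in HX; apply over_vars_ins; auto).
  assert (Hag : forall v, v <> i -> v <> i ->
            expressed (leaf_list Y) v = expressed (leaf_list X) v).
  { intros v H1 _. rewrite EX, EY. apply (expressed_edit l1 l2 [(i,true)] []). simpl.
    rewrite (proj2 (Nat.eqb_neq i v)); auto. }
  assert (Hnone : first_sign (leaf_list X) i = None).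
  { pose proof (npos_full [] (leaf_list X) Hfull i eq_refl).
    unfold expressed in Hc. destruct (first_sign (leaf_list X) i) as [[|]|]; congruence. }
  assert (HcY : expressed (leaf_list Y) i = true).
  { rewrite EX, first_sign_app in Hnone. unfold expressed; rewrite EY, first_sign_app.
    destruct (first_sign l1 i); [discriminate|]. simpl. rewrite Nat.eqb_refl; auto. }
  apply select_acc. left.
  pose proof (worder_local n w _ _ i i HX HY Hi Hi Hag) as D. rewrite Nat.eqb_refl in D.
  rewrite HcY, Hc in D. unfold b2R in D. unfold WORDER. assert (Hw := wpos _ Hi). lra.
Qed.

End Acceptance.

(** * The potential *)

Lemma ln_le_xm1 x : 0 < x -> ln x <= x - 1.
Proof. intros H. pose proof (exp_ineq1_le (ln x)). rewrite exp_ln in H0; auto. lra. Qed.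

Lemma ln_mono x y : 0 < x -> x <= y -> ln x <= ln y.
Proof.
  intros H1 H2. destruct (Rle_lt_or_eq_dec x y H2).
  - left; apply ln_increasing; auto.
  - subst; lra.
Qed.

Lemma ln_ge0 x : 1 <= x -> 0 <= ln x.
Proof. intros H. rewrite <- ln_1. apply ln_mono; lra. Qed.

(** [lnh m] is [0] for [m = 0] and [1 + ln m] otherwise: an upper bound of the
    harmonic number [H_m] whose increments still dominate [1/m]. *)
Definition lnh (m : nat) : R := match m with O => 0 | _ => 1 + ln (INR m) end.

Lemma lnh_S m : lnh (S m) = 1 + ln (INR (S m)).
Proof. reflexivity. Qed.

Lemma lnh_nonneg m : 0 <= lnh m.
Proof.
  destruct m; [simpl; lra|]. rewrite lnh_S.
  pose proof (ln_ge0 (INR (S m)) ltac:(apply (le_INR 1); lia)). lra.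
Qed.

Lemma lnh_mono a b : (a <= b)%nat -> lnh a <= lnh b.
Proof.
  intros H. destruct a as [|a]; [apply lnh_nonneg|]. destruct b as [|b]; [lia|].
  rewrite !lnh_S. pose proof (ln_mono (INR (S a)) (INR (S b)) ltac:(apply lt_0_INR; lia)
                            ltac:(apply le_INR; lia)). lra.
Qed.

(** [ln m - ln (m-1) >= 1/m], from [ln ((m-1)/m) <= (m-1)/m - 1]. *)
Lemma lnh_step m : (1 <= m)%nat -> lnh m - lnh (m - 1) >= 1 / INR m.
Proof.
  intros Hm. destruct m as [|[|m]]; [lia| |].
  - simpl. rewrite ln_1. lra.
  - replace (S (S m) - 1)%nat with (S m) by lia. rewrite !lnh_S.
    assert (H1 : 1 <= INR (S m)) by (apply (le_INR 1); lia).
    assert (Hm' : INR (S (S m)) = INR (S m) + 1) by apply S_INR.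
    pose proof (ln_le_xm1 (INR (S m) / INR (S (S m)))) as H.
    assert (Hq : 0 < INR (S m) / INR (S (S m))) by (apply Rdiv_lt_0_compat; lra).
    specialize (H Hq). unfold Rdiv in H.
    rewrite ln_mult, ln_Rinv in H by (try apply Rinv_0_lt_compat; lra).
    assert (INR (S m) * / INR (S (S m)) - 1 = - (1 / INR (S (S m)))) by (rewrite Hm'; field; lra).
    lra.
Qed.

(** [x lnh m <= x ln x + m] for [x >= 1], from [ln (m/x) <= m/x - 1]. *)
Lemma lnh_bound x m : 1 <= x -> x * lnh m <= x * ln x + INR m.
Proof.
  intros Hx. destruct m as [|m].
  - simpl. pose proof (ln_ge0 x Hx). nra.
  - rewrite lnh_S. assert (Hm : 0 < INR (S m)) by (apply lt_0_INR; lia).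
    pose proof (ln_le_xm1 (INR (S m) / x) ltac:(apply Rdiv_lt_0_compat; lra)) as H.
    unfold Rdiv in H. rewrite ln_mult, ln_Rinv in H by (try apply Rinv_0_lt_compat; lra).
    assert (x * (INR (S m) * / x - 1) = INR (S m) - x) by (field; lra).
    nra.
Qed.

Section Potential.
Variable n : nat.
Hypothesis n1 : (1 <= n)%nat.

Lemma INR_n_ge1 : 1 <= INR n.
Proof. apply (le_INR 1); auto. Qed.

(** [F] charges the [b = L - P] leaves that are not expressed first occurrences,
    [G] the [k = n - P] unexpressed variables. *)
Definition F (b : nat) : R := 3 * INR b + 3 * INR n * lnh b.
Definition G (k : nat) : R := 6 * INR n * lnh k.

Lemma F_mono a b : (a <= b)%nat -> F a <= F b.
Proof.
  intros H. unfold F. pose proof (lnh_mono a b H). pose proof (le_INR a b H).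
  pose proof INR_n_ge1. nra.
Qed.

Lemma G_mono a b : (a <= b)%nat -> G a <= G b.
Proof. intros H. unfold G. pose proof (lnh_mono a b H). pose proof INR_n_ge1. nra. Qed.

Lemma F_step b : (1 <= b)%nat -> F b - F (b - 1) >= 3 + 3 * INR n / INR b.
Proof.
  intros Hb. unfold F. rewrite minus_INR by lia. pose proof (lnh_step b Hb).
  pose proof INR_n_ge1. unfold Rdiv in *. simpl (INR 1). nra.
Qed.

Lemma G_step k : (1 <= k)%nat -> G k - G (k - 1) >= 6 * INR n / INR k.
Proof. intros Hk. unfold G. pose proof (lnh_step k Hk). pose proof INR_n_ge1. unfold Rdiv in *. nra. Qed.

Definition potential (X : stree) : R := F (nlit X - nexpr X) + G (n - nexpr X).

Lemma potential_nonneg X : 0 <= potential X.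
Proof.
  unfold potential. pose proof (F_mono 0 (nlit X - nexpr X) ltac:(lia)).
  pose proof (G_mono 0 (n - nexpr X) ltac:(lia)). unfold F, G in *. simpl in *. lra.
Qed.

Lemma potential_mono X Y : (nexpr X <= nexpr Y)%nat ->
  (nlit Y - nexpr Y <= nlit X - nexpr X)%nat -> potential Y <= potential X.
Proof.
  intros H1 H2. unfold potential.
  pose proof (F_mono _ _ H2). pose proof (G_mono (n - nexpr Y) (n - nexpr X) ltac:(lia)). lra.
Qed.

Variable w : nat -> R.
Hypothesis wpos : forall i, (i < n)%nat -> 0 < w i.

Lemma potential_after_sub X Y l1 a l2 u : over_vars n (leaf_list X) -> (fst u < n)%nat ->
  leaf_list X = l1 ++ a :: l2 -> leaf_list Y = l1 ++ u :: l2 ->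
  potential (select w X Y) <= potential X.
Proof.
  intros. destruct (select_cases w X Y) as [H3|[H3 _]]; rewrite H3; [lra|].
  destruct (accepted_sub n w wpos X Y l1 a l2 u) as [A B]; auto.
  apply potential_mono; auto. lia.
Qed.

Lemma potential_after_del X Y l1 a l2 : over_vars n (leaf_list X) ->
  leaf_list X = l1 ++ a :: l2 -> leaf_list Y = l1 ++ l2 ->
  potential (select w X Y) <=
  potential X - (if Nat.leb (nexpr X) (nexpr Y)
                 then F (nlit X - nexpr X) - F (nlit X - nexpr X - 1) else 0).
Proof.
  intros HX EX EY.
  pose proof (accepted_del n w wpos X Y l1 a l2 HX EX EY) as [A1 A2].
  assert (HL : nlit Y = (nlit X - 1)%nat /\ (1 <= nlit X)%nat)
    by (unfold nlit; rewrite EX, EY, !length_app; simpl; lia).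
  pose proof (npos_le_length [] (leaf_list Y)) as HPY.
  fold (nexpr Y) (nlit Y) in HPY.
  destruct (Nat.leb (nexpr X) (nexpr Y)) eqn:E.
  - apply Nat.leb_le in E. rewrite (A2 E). unfold potential.
    pose proof (F_mono (nlit Y - nexpr Y) (nlit X - nexpr X - 1) ltac:(lia)).
    pose proof (G_mono (n - nexpr Y) (n - nexpr X) ltac:(lia)). lra.
  - destruct (select_cases w X Y) as [H3|[H3 _]]; rewrite H3; [lra|].
    apply Nat.leb_gt in E. specialize (A1 H3). lia.
Qed.

(** [ins_gain X u] is [1] when [P(X) = L(X)] and [u] is the positive literal of
    an unexpressed variable (so inserting [u] is accepted), else [0]. *)
Definition ins_gain (X : stree) (u : lit) : R :=
  if Nat.eqb (nexpr X) (nlit X) then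
    (if snd u then (if expressed (leaf_list X) (fst u) then 0 else 1) else 0) else 0.

Lemma potential_after_ins X Y l1 l2 u : over_vars n (leaf_list X) -> (fst u < n)%nat ->
  leaf_list X = l1 ++ l2 -> leaf_list Y = l1 ++ u :: l2 ->
  potential (select w X Y) <=
  potential X - (G (n - nexpr X) - G (n - nexpr X - 1)) * ins_gain X u.
Proof.
  intros HX Hu EX EY.
  assert (HY : over_vars n (leaf_list Y))
    by (rewrite EY; rewrite EX in HX; apply (over_vars_ins n); auto).
  pose proof (npos_le_n n _ HY) as HPn. fold (nexpr Y) in HPn.
  assert (Hno_gain : potential (select w X Y) <= potential X).
  { destruct (select_cases w X Y) as [H3|[H3 _]]; rewrite H3; [lra|].
    destruct (accepted_ins n w wpos X Y l1 l2 u HX Hu EX EY H3).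
    apply potential_mono; lia. }
  unfold ins_gain. destruct (Nat.eqb (nexpr X) (nlit X)) eqn:E1; [|lra].
  destruct u as [i [|]]; simpl snd; simpl fst in *; [|lra].
  destruct (expressed (leaf_list X) i) eqn:E2; [lra|].
  apply Nat.eqb_eq in E1.
  pose proof (ins_missing_accepted n w wpos X Y l1 l2 i HX Hu EX EY E2 E1) as Hs.
  destruct (accepted_ins n w wpos X Y l1 l2 (i, true) HX Hu EX EY Hs) as [B1 B2].
  rewrite Hs. unfold potential.
  replace (nlit Y - nexpr Y)%nat with (nlit X - nexpr X)%nat by lia.
  replace (n - nexpr Y)%nat with (n - nexpr X - 1)%nat by lia. lra.
Qed.

End Potential.

(** * Expected potential after one mutation *)

Definition harmful (seen : list nat) (L : list lit) (j : nat) : bool :=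
  Nat.ltb (npos seen (remove_nth j L)) (npos seen L).

Lemma harmful_count seen L :
  lsum (seq 0 (length L)) (fun j => b2R (harmful seen L j)) <= INR (npos seen L).
Proof.
  revert seen; induction L as [|[i b] r IH]; intros seen.
  - simpl. unfold lsum; simpl. lra.
  - cbn [length]. rewrite lsum_seq_S. unfold harmful at 1. cbn [remove_nth].
    destruct (existsb (Nat.eqb i) seen) eqn:E.
    + assert (Hs : forall x, npos seen ((i, b) :: x) = npos seen x) by (intros; simpl; rewrite E; auto).
      rewrite Hs, Nat.ltb_irrefl.
      rewrite (lsum_ext _ _ (fun j => b2R (harmful seen r j))).
      * specialize (IH seen). simpl b2R. lra.
      * intros j _. unfold harmful. cbn [remove_nth]. rewrite !Hs. auto.
    + assert (Hs : forall x, npos seen ((i, b) :: x) = ((if b then 1 else 0) + npos (i :: seen) x)%nat)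
        by (intros; simpl; rewrite E; auto).
      rewrite (lsum_ext _ _ (fun j => b2R (harmful (i :: seen) r j))).
      * specialize (IH (i :: seen)). rewrite Hs, plus_INR.
        assert (Hm : (npos (i :: seen) r <= npos seen r)%nat) by (apply npos_antimono; intros; right; auto).
        assert (b2R (Nat.ltb (npos seen r) ((if b then 1 else 0) + npos (i :: seen) r))
                 <= INR (if b then 1 else 0)).
        { unfold b2R. destruct (Nat.ltb _ _) eqn:E2; destruct b; simpl; try lra.
          apply Nat.ltb_lt in E2; lia. }
        lra.
      * intros j _. unfold harmful. cbn [remove_nth]. rewrite !Hs. f_equal.
        destruct (Nat.ltb (npos (i :: seen) (remove_nth j r)) (npos (i :: seen) r)) eqn:E2.
        -- apply Nat.ltb_lt in E2. apply Nat.ltb_lt. lia.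
        -- apply Nat.ltb_ge in E2. apply Nat.ltb_ge. lia.
Qed.

Definition expect (d : list (R * stree)) (f : stree -> R) : R := lsum d (fun q => fst q * f (snd q)).

Lemma expect_scale p d f : expect (scale p d) f = p * expect d f.
Proof. unfold expect, scale. rewrite lsum_map, <- lsum_scal. apply lsum_ext. intros; simpl; lra. Qed.

Lemma expect_mutate n X f : expect (mutate_dist n X) f =
  / 3 * (expect (substitute_dist n X) f + expect (insert_dist n X) f + expect (delete_dist X) f).
Proof.
  unfold mutate_dist, expect at 1. rewrite !lsum_app. fold (expect (scale (/3) (substitute_dist n X)) f).
  fold (expect (scale (/3) (insert_dist n X)) f). fold (expect (scale (/3) (delete_dist X)) f).
  rewrite !expect_scale. lra.
Qed.

Lemma INR_2n n : INR (2 * n) = 2 * INR n.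
Proof. rewrite mult_INR; simpl; lra. Qed.

Section OneStep.
Variable n : nat.
Hypothesis n1 : (1 <= n)%nat.
Variable w : nat -> R.
Hypothesis wpos : forall i, (i < n)%nat -> 0 < w i.

Definition next_potential (X Y : stree) : R := potential n (select w X Y).

Lemma sub_bound X : over_vars n (leaf_list X) ->
  expect (substitute_dist n X) (next_potential X) <= potential n X.
Proof.
  intros HX. unfold expect, next_potential. destruct X as [t|].
  - unfold substitute_dist. rewrite lsum_flat_map.
    set (p := / (INR (nleaves t) * INR (2 * n))).
    assert (Hl : 0 < INR (nleaves t)) by (apply lt_0_INR; pose proof (nleaves_pos t); lia).
    assert (Hp : 0 < p).
    { unfold p. rewrite INR_2n. pose proof (INR_n_ge1 n n1). apply Rinv_0_lt_compat. nra. }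
    apply Rle_trans with (lsum (seq 0 (nleaves t))
                            (fun _ => lsum (terminals n) (fun _ => p * potential n (Some t)))).
    + apply lsum_le. intros j Hj. apply in_seq in Hj. rewrite lsum_map. apply lsum_le.
      intros u Hu. simpl fst; simpl snd. apply Rmult_le_compat_l; [lra|].
      destruct (replace_split t j u) as (l1 & a & l2 & E1 & E2); [lia|].
      apply (potential_after_sub n n1 w wpos (Some t) _ l1 a l2 u); auto.
      apply (terminals_vars n u Hu).
    + rewrite lsum_terminals_const, lsum_const, length_seq. unfold p. rewrite INR_2n.
      pose proof (INR_n_ge1 n n1). right. field. lra.
  - simpl. unfold lsum; simpl. rewrite select_self. lra.
Qed.

(** Each insertion position and orientation is tried with total probability
    [1/(2n)] per literal [u]; only [ins_gain] lowers the potential. *)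
Lemma ins_bound X : over_vars n (leaf_list X) ->
  expect (insert_dist n X) (next_potential X) <=
  potential n X - (G n (n - nexpr X) - G n (n - nexpr X - 1))
                    * lsum (terminals n) (ins_gain X) / (2 * INR n).
Proof.
  intros HX. unfold expect, next_potential. set (D := G n (n - nexpr X) - G n (n - nexpr X - 1)).
  pose proof (INR_n_ge1 n n1).
  assert (Hterm : lsum (terminals n) (fun u => potential n X - D * ins_gain X u)
                  = 2 * INR n * potential n X - D * lsum (terminals n) (ins_gain X)).
  { rewrite (lsum_ext _ _ (fun u => potential n X + (- D) * ins_gain X u)) by (intros; lra).
    rewrite lsum_plus, lsum_scal, lsum_terminals_const. lra. }
  destruct X as [t|].
  - unfold insert_dist. rewrite lsum_flat_map.
    set (p := / (INR (tsize t) * INR (2 * n) * 2)).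
    assert (Hs : 0 < INR (tsize t))
      by (apply lt_0_INR; rewrite tsize_leaves; pose proof (nleaves_pos t); lia).
    assert (Hp : 0 < p) by (unfold p; apply Rinv_0_lt_compat; rewrite INR_2n; nra).
    apply Rle_trans with (lsum (seq 0 (tsize t)) (fun _ => lsum (terminals n)
                            (fun u => 2 * p * (potential n (Some t) - D * ins_gain (Some t) u)))).
    + apply lsum_le. intros k _. rewrite lsum_flat_map. apply lsum_le.
      intros u Hu. rewrite lsum_map. unfold lsum; simpl fst; simpl snd; simpl.
      destruct (insert_split t k u true) as (l1 & l2 & E1 & E2).
      destruct (insert_split t k u false) as (m1 & m2 & F1 & F2).
      pose proof (potential_after_ins n n1 w wpos (Some t) (Some (insert_at t k u true)) l1 l2 u
                    HX (terminals_vars n u Hu) E1 E2) as Htrue.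
      pose proof (potential_after_ins n n1 w wpos (Some t) (Some (insert_at t k u false)) m1 m2 u
                    HX (terminals_vars n u Hu) F1 F2) as Hfalse.
      fold D in Htrue, Hfalse. nra.
    + rewrite lsum_const, length_seq, lsum_scal, Hterm. unfold p. rewrite INR_2n.
      right. field. lra.
  - unfold insert_dist. rewrite lsum_map. simpl fst; simpl snd.
    apply Rle_trans with
      (lsum (terminals n) (fun u => / INR (2 * n) * (potential n None - D * ins_gain None u))).
    + apply lsum_le. intros u Hu. apply Rmult_le_compat_l.
      * left; apply Rinv_0_lt_compat; rewrite INR_2n; lra.
      * apply (potential_after_ins n n1 w wpos None (Some (Leaf u)) [] [] u HX (terminals_vars n u Hu)); auto.
    + rewrite lsum_scal, Hterm, INR_2n. right. field. lra.
Qed.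

Lemma del_one_bound t j : over_vars n (leaves t) -> (j < nleaves t)%nat ->
  next_potential (Some t) (delete_leaf t j) <=
  potential n (Some t) - (F n (nlit (Some t) - nexpr (Some t)) - F n (nlit (Some t) - nexpr (Some t) - 1))
                         * (1 - b2R (harmful [] (leaves t) j)).
Proof.
  intros HX Hj.
  assert (Hj' : (j < length (leaves t))%nat) by (rewrite <- nleaves_len; lia).
  destruct (remove_nth_split j (leaves t) Hj') as (l1 & a & l2 & E1 & E2).
  pose proof (delete_leaves t j Hj) as E3.
  pose proof (potential_after_del n n1 w wpos (Some t) (delete_leaf t j) l1 a l2 HX E1
                ltac:(rewrite E3; exact E2)) as H.
  unfold next_potential. eapply Rle_trans; [exact H|].
  unfold harmful. unfold nexpr at 1 3. simpl leaf_list. rewrite <- E3.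
  destruct (Nat.leb (npos [] (leaves t)) (nexpr (delete_leaf t j))) eqn:E; unfold nexpr in *.
  - apply Nat.leb_le in E. rewrite (proj2 (Nat.ltb_ge _ _)) by lia. simpl. lra.
  - apply Nat.leb_gt in E. rewrite (proj2 (Nat.ltb_lt _ _)) by lia. simpl. lra.
Qed.

(** Each leaf is deleted with probability [1/L]; the at least [L - P]
    non-harmful deletions lower [F] by one step. *)
Lemma del_bound X : over_vars n (leaf_list X) -> (1 <= nlit X)%nat ->
  expect (delete_dist X) (next_potential X) <=
  potential n X - (F n (nlit X - nexpr X) - F n (nlit X - nexpr X - 1))
                    * INR (nlit X - nexpr X) / INR (nlit X).
Proof.
  intros HX HL.
  destruct X as [t|]; [|unfold nlit in HL; simpl in HL; lia].
  set (D := F n (nlit (Some t) - nexpr (Some t)) - F n (nlit (Some t) - nexpr (Some t) - 1)).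
  set (bad := fun j => b2R (harmful [] (leaves t) j)).
  assert (HLt : nlit (Some t) = nleaves t) by (unfold nlit; simpl; rewrite nleaves_len; auto).
  assert (HPt : nexpr (Some t) = npos [] (leaves t)) by reflexivity.
  assert (HD : 0 <= D) by (unfold D; pose proof (F_mono n n1 (nlit (Some t) - nexpr (Some t) - 1)
                                        (nlit (Some t) - nexpr (Some t)) ltac:(lia)); lra).
  assert (Hl : 0 < INR (nleaves t)) by (apply lt_0_INR; lia).
  unfold expect, delete_dist. rewrite lsum_map. simpl fst; simpl snd.
  apply Rle_trans with (lsum (seq 0 (nleaves t)) (fun j => / INR (nleaves t) *
                          (potential n (Some t) - D * (1 - bad j)))).
  - apply lsum_le. intros j Hj. apply in_seq in Hj.
    apply Rmult_le_compat_l; [left; apply Rinv_0_lt_compat; lra|].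
    apply del_one_bound; auto; lia.
  - rewrite lsum_scal.
    rewrite (lsum_ext _ _ (fun j => (potential n (Some t) - D) + D * bad j)) by (intros; lra).
    rewrite lsum_plus, lsum_scal, lsum_const, length_seq.
    pose proof (harmful_count [] (leaves t)) as Hc. rewrite <- nleaves_len in Hc. fold bad in Hc.
    assert (Hle : (npos [] (leaves t) <= nleaves t)%nat)
      by (rewrite nleaves_len; apply npos_le_length).
    rewrite HLt, HPt, minus_INR by auto. fold D.
    apply Rle_trans with (/ INR (nleaves t) * (INR (nleaves t) * (potential n (Some t) - D)
                                               + D * INR (npos [] (leaves t)))).
    + apply Rmult_le_compat_l; [left; apply Rinv_0_lt_compat; lra|]. nra.
    + right. field. lra.
Qed.

End OneStep.

(** * Drift of the potential *)

Lemma sumR_indicator_le n f c : (forall v, (v < n)%nat -> 0 <= f v) ->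
  sumR n (fun v => f v * b2R (c v)) <= sumR n f.
Proof. intros H. apply sumR_le. intros v Hv. pose proof (H v Hv). unfold b2R; destruct (c v); lra. Qed.

Lemma sumR_indicator_eq n f c : (forall v, (v < n)%nat -> 0 < f v) ->
  sumR n (fun v => f v * b2R (c v)) = sumR n f -> forall v, (v < n)%nat -> c v = true.
Proof.
  intros H Heq v Hv. destruct (c v) eqn:E; auto. exfalso.
  assert (sumR n (fun v => f v * b2R (c v)) < sumR n f); [|lra].
  apply (sumR_lt n _ _ v Hv).
  - intros u Hu. pose proof (H u Hu). unfold b2R; destruct (c u); lra.
  - rewrite E. pose proof (H v Hv). unfold b2R. lra.
Qed.

Section Drift.
Variable n : nat.
Hypothesis n1 : (1 <= n)%nat.
Variable w : nat -> R.
Hypothesis wpos : forall i, (i < n)%nat -> 0 < w i.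

Lemma ins_gain_sum X : over_vars n (leaf_list X) ->
  lsum (terminals n) (ins_gain X) = if Nat.eqb (nexpr X) (nlit X) then INR (n - nexpr X) else 0.
Proof.
  intros HX. rewrite lsum_terminals. unfold ins_gain. simpl fst; simpl snd.
  destruct (Nat.eqb (nexpr X) (nlit X)).
  - set (c := fun i => b2R (expressed (leaf_list X) i)).
    rewrite (lsum_ext _ _ (fun i => 1 - c i))
      by (intros i _; unfold c, b2R; destruct (expressed (leaf_list X) i); lra).
    rewrite lsum_seq_sumR, minus_INR by (apply npos_le_n; auto).
    assert (Hc : INR (nexpr X) = sumR n c) by (apply npos_sum; auto).
    assert (Hs : sumR n (fun i => 1 - c i) + sumR n c = INR n).
    { rewrite <- sumR_plus, <- (Rmult_1_r (INR n)), <- sumR_const.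
      apply sumR_ext; intros; lra. }
    lra.
  - rewrite (lsum_ext _ _ (fun _ => 0)) by (intros; lra). rewrite lsum_const; lra.
Qed.

Lemma ins_nonincr X : over_vars n (leaf_list X) ->
  expect (insert_dist n X) (next_potential n w X) <= potential n X.
Proof.
  intros HX. pose proof (ins_bound n n1 w wpos X HX) as H. rewrite ins_gain_sum in H by auto.
  pose proof (G_mono n n1 (n - nexpr X - 1) (n - nexpr X) ltac:(lia)).
  pose proof (INR_n_ge1 n n1).
  assert (0 <= (if Nat.eqb (nexpr X) (nlit X) then INR (n - nexpr X) else 0) / (2 * INR n)).
  { unfold Rdiv. apply Rmult_le_pos; [destruct (Nat.eqb _ _); [apply pos_INR|lra]|].
    left; apply Rinv_0_lt_compat; lra. }
  unfold Rdiv in *. nra.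
Qed.

Lemma ins_drop X : over_vars n (leaf_list X) -> nexpr X = nlit X -> (nexpr X < n)%nat ->
  expect (insert_dist n X) (next_potential n w X) <= potential n X - 3.
Proof.
  intros HX Hfull Hmiss. pose proof (ins_bound n n1 w wpos X HX) as H.
  rewrite ins_gain_sum, (proj2 (Nat.eqb_eq _ _) Hfull) in H by auto.
  pose proof (G_step n n1 (n - nexpr X) ltac:(lia)) as Hst.
  set (D := G n (n - nexpr X) - G n (n - nexpr X - 1)) in *.
  pose proof (INR_n_ge1 n n1).
  assert (Hk : 0 < INR (n - nexpr X)) by (apply lt_0_INR; lia).
  assert (D * INR (n - nexpr X) >= 6 * INR n).
  { apply Rle_ge. apply Rle_trans with ((6 * INR n / INR (n - nexpr X)) * INR (n - nexpr X)).
    - right; field; lra.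
    - apply Rmult_le_compat_r; lra. }
  assert (D * INR (n - nexpr X) / (2 * INR n) >= 3).
  { apply Rle_ge. apply Rle_trans with (6 * INR n * / (2 * INR n)).
    - right; field; lra.
    - unfold Rdiv. apply Rmult_le_compat_r; [left; apply Rinv_0_lt_compat|]; lra. }
  lra.
Qed.

Lemma del_nonincr X : over_vars n (leaf_list X) ->
  expect (delete_dist X) (next_potential n w X) <= potential n X.
Proof.
  intros HX. destruct X as [t|].
  - assert (HL : (1 <= nlit (Some t))%nat)
      by (unfold nlit; simpl; rewrite <- nleaves_len; apply nleaves_pos).
    pose proof (del_bound n n1 w wpos (Some t) HX HL) as H.
    pose proof (F_mono n n1 (nlit (Some t) - nexpr (Some t) - 1) (nlit (Some t) - nexpr (Some t))
                  ltac:(lia)).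
    assert (0 <= INR (nlit (Some t) - nexpr (Some t)) / INR (nlit (Some t))).
    { unfold Rdiv. apply Rmult_le_pos; [apply pos_INR|]. left; apply Rinv_0_lt_compat, lt_0_INR; lia. }
    unfold Rdiv in *. nra.
  - unfold expect, next_potential; simpl. unfold lsum; simpl. rewrite select_self. lra.
Qed.

(** If some leaf is not an expressed first occurrence ([b = L - P >= 1]),
    deletion lowers the expected potential by [3], since a fraction [b/L] of
    the deletions gains [F(b) - F(b-1) >= 3 + 3n/b] and [L <= b + n]. *)
Lemma del_drop X : over_vars n (leaf_list X) -> (1 <= nlit X - nexpr X)%nat ->
  expect (delete_dist X) (next_potential n w X) <= potential n X - 3.
Proof.
  intros HX Hb. pose proof (del_bound n n1 w wpos X HX ltac:(lia)) as H.
  pose proof (F_step n n1 (nlit X - nexpr X) Hb) as Hst.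
  set (D := F n (nlit X - nexpr X) - F n (nlit X - nexpr X - 1)) in *.
  pose proof (INR_n_ge1 n n1).
  assert (Hbp : 0 < INR (nlit X - nexpr X)) by (apply lt_0_INR; lia).
  assert (HLp : 0 < INR (nlit X)) by (apply lt_0_INR; lia).
  assert (HLb : INR (nlit X) <= INR (nlit X - nexpr X) + INR n).
  { rewrite <- plus_INR. apply le_INR. pose proof (npos_le_n n _ HX). unfold nexpr in *. lia. }
  assert (D * INR (nlit X - nexpr X) >= 3 * INR (nlit X - nexpr X) + 3 * INR n).
  { apply Rle_ge. apply Rle_trans with
      ((3 + 3 * INR n / INR (nlit X - nexpr X)) * INR (nlit X - nexpr X)).
    - right; field; lra.
    - apply Rmult_le_compat_r; lra. }
  assert (D * INR (nlit X - nexpr X) / INR (nlit X) >= 3).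
  { apply Rle_ge. unfold Rdiv. apply Rle_trans with (3 * INR (nlit X) * / INR (nlit X)).
    - right; field; lra.
    - apply Rmult_le_compat_r; [left; apply Rinv_0_lt_compat|]; lra. }
  lra.
Qed.

(** A tree whose [n] leaves express all [n] variables is optimal: it attains
    the maximal WORDER [Σ w], and any tree attaining it has at least [n] leaves. *)
Lemma optimal_of_full X : over_vars n (leaf_list X) -> nexpr X = n -> nlit X = n ->
  optimal n w X.
Proof.
  intros HX HP HL.
  assert (Hw0 : forall v, (v < n)%nat -> 0 <= w v) by (intros v Hv; pose proof (wpos v Hv); lra).
  assert (Hall : forall Y, over_vars n (leaf_list Y) ->
            INR (nexpr Y) = INR n -> forall v, (v < n)%nat -> expressed (leaf_list Y) v = true).
  { intros Y HY HPY. apply (sumR_indicator_eq n (fun _ => 1)); [intros; lra|].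
    rewrite sumR_const, Rmult_1_r, <- HPY. unfold nexpr. rewrite (npos_sum n) by auto.
    apply sumR_ext; intros; lra. }
  assert (HWX : WORDER w X = sumR n w).
  { unfold WORDER. rewrite (worder_sum n) by auto. apply sumR_ext. intros v Hv.
    rewrite (Hall X HX) by (auto; rewrite HP; auto). unfold b2R; lra. }
  split.
  - intros Y HY. rewrite HWX. unfold WORDER. rewrite (worder_sum n) by exact HY.
    apply sumR_indicator_le; auto.
  - intros Y HY Heq. rewrite HWX in Heq. unfold WORDER in Heq. rewrite (worder_sum n) in Heq by exact HY.
    pose proof (sumR_indicator_eq n w _ wpos Heq) as HexpY.
    assert (HPY : INR (nexpr Y) = INR n).
    { unfold nexpr. rewrite (npos_sum n) by exact HY. rewrite <- (Rmult_1_r (INR n)), <- sumR_const.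
      apply sumR_ext. intros v Hv. rewrite HexpY by auto. reflexivity. }
    apply INR_eq in HPY. pose proof (npos_le_length [] (leaf_list Y)).
    rewrite !cplx_len. unfold nlit, nexpr in *. lia.
Qed.

Lemma potential_drift X : over_vars n (leaf_list X) -> ~ optimal n w X ->
  expect (mutate_dist n X) (next_potential n w X) <= potential n X - 1.
Proof.
  intros HX Hno. rewrite expect_mutate.
  pose proof (sub_bound n n1 w wpos X HX).
  pose proof (npos_le_length [] (leaf_list X)) as HPL. fold (nexpr X) (nlit X) in HPL.
  pose proof (npos_le_n n _ HX) as HPn. fold (nexpr X) in HPn.
  destruct (Nat.eq_dec (nlit X) (nexpr X)) as [Hfull|Hbad].
  - destruct (Nat.eq_dec (nexpr X) n) as [Hn|Hmiss].
    + exfalso. apply Hno. apply optimal_of_full; auto; lia.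
    + pose proof (ins_drop X HX ltac:(lia) ltac:(lia)). pose proof (del_nonincr X HX). lra.
  - pose proof (ins_nonincr X HX). pose proof (del_drop X HX ltac:(lia)). lra.
Qed.

End Drift.

(** * Additive drift bound on the expected optimization time *)

Definition valid_dist (n : nat) (d : list (R * stree)) : Prop :=
  forall q, In q d -> 0 <= fst q /\ over_vars n (leaf_list (snd q)).

Lemma valid_dist_scale n p d : 0 <= p -> valid_dist n d -> valid_dist n (scale p d).
Proof.
  intros Hp Hd q Hq. unfold scale in Hq. apply in_map_iff in Hq.
  destruct Hq as (q' & <- & Hq'). destruct (Hd q' Hq'). simpl. split; auto. nra.
Qed.

Lemma valid_dist_app n d1 d2 : valid_dist n d1 -> valid_dist n d2 -> valid_dist n (d1 ++ d2).
Proof. intros H1 H2 q Hq. apply in_app_or in Hq. destruct Hq; auto. Qed.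

Section Support.
Variable n : nat.
Hypothesis n1 : (1 <= n)%nat.
Variable X : stree.
Hypothesis HX : over_vars n (leaf_list X).

Lemma valid_substitute : valid_dist n (substitute_dist n X).
Proof.
  pose proof (INR_n_ge1 n n1). intros q Hq. destruct X as [t|].
  - apply in_flat_map in Hq. destruct Hq as (j & Hj & Hq).
    apply in_map_iff in Hq. destruct Hq as (u & <- & Hu). apply in_seq in Hj. cbn [fst snd]. split.
    + left. apply Rinv_0_lt_compat. rewrite INR_2n.
      assert (0 < INR (nleaves t)) by (apply lt_0_INR; pose proof (nleaves_pos t); lia). nra.
    + destruct (replace_split t j u) as (l1 & a & l2 & E1 & E2); [lia|]. simpl leaf_list. rewrite E2.
      simpl in HX; rewrite E1 in HX. apply (over_vars_sub n l1 a l2); auto. apply (terminals_vars n u Hu).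
  - destruct Hq as [<-|[]]. simpl. split; [lra|auto].
Qed.

Lemma valid_insert : valid_dist n (insert_dist n X).
Proof.
  pose proof (INR_n_ge1 n n1). intros q Hq. destruct X as [t|].
  - apply in_flat_map in Hq. destruct Hq as (k & _ & Hq).
    apply in_flat_map in Hq. destruct Hq as (u & Hu & Hq).
    apply in_map_iff in Hq. destruct Hq as (f & <- & _). cbn [fst snd]. split.
    + left. apply Rinv_0_lt_compat. rewrite INR_2n.
      assert (0 < INR (tsize t))
        by (apply lt_0_INR; rewrite tsize_leaves; pose proof (nleaves_pos t); lia). nra.
    + destruct (insert_split t k u f) as (l1 & l2 & E1 & E2). simpl leaf_list. rewrite E2.
      simpl in HX; rewrite E1 in HX. apply (over_vars_ins n); auto. apply (terminals_vars n u Hu).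
  - apply in_map_iff in Hq. destruct Hq as (u & <- & Hu). cbn [fst snd]. split.
    + left. apply Rinv_0_lt_compat. rewrite INR_2n. lra.
    + intros a [<-|[]]. apply (terminals_vars n u Hu).
Qed.

Lemma valid_delete : valid_dist n (delete_dist X).
Proof.
  intros q Hq. destruct X as [t|].
  - apply in_map_iff in Hq. destruct Hq as (j & <- & Hj). apply in_seq in Hj. simpl. split.
    + left. apply Rinv_0_lt_compat, lt_0_INR. lia.
    + rewrite delete_leaves by lia.
      assert (Hj' : (j < length (leaves t))%nat) by (rewrite <- nleaves_len; lia).
      destruct (remove_nth_split j (leaves t) Hj') as (l1 & a & l2 & E1 & E2). rewrite E2.
      simpl in HX; rewrite E1 in HX. apply (over_vars_del n l1 a l2); auto.
  - destruct Hq as [<-|[]]. simpl. split; [lra|auto].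
Qed.

Lemma valid_mutate : valid_dist n (mutate_dist n X).
Proof.
  unfold mutate_dist.
  repeat apply valid_dist_app; apply valid_dist_scale;
    auto using valid_substitute, valid_insert, valid_delete; lra.
Qed.

End Support.

Lemma select_over_vars n w X Y : over_vars n (leaf_list X) -> over_vars n (leaf_list Y) ->
  over_vars n (leaf_list (select w X Y)).
Proof. intros. destruct (select_cases w X Y) as [H1|[H1 _]]; rewrite H1; auto. Qed.

Section AdditiveDrift.
Variable n : nat.
Hypothesis n1 : (1 <= n)%nat.
Variable w : nat -> R.

Variable g : stree -> R.
Hypothesis g_nonneg : forall X, over_vars n (leaf_list X) -> 0 <= g X.
Hypothesis g_drift : forall X, over_vars n (leaf_list X) -> ~ optimal n w X ->
  expect (mutate_dist n X) (fun Y => g (select w X Y)) <= g X - 1.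

Lemma not_opt_prob_optimal t X : optimal n w X -> not_opt_prob n w t X = 0.
Proof.
  intros H. destruct t; simpl; destruct (excluded_middle_informative (optimal n w X)); auto; contradiction.
Qed.

Lemma not_opt_prob_0 X : ~ optimal n w X -> not_opt_prob n w 0 X = 1.
Proof. intros H. simpl; destruct (excluded_middle_informative (optimal n w X)); auto; contradiction. Qed.

Lemma not_opt_prob_S t X : ~ optimal n w X -> not_opt_prob n w (S t) X =
  lsum (mutate_dist n X) (fun q => fst q * not_opt_prob n w t (select w X (snd q))).
Proof. intros H. simpl; destruct (excluded_middle_informative (optimal n w X)); [contradiction|reflexivity]. Qed.

Lemma expected_time_partial_lsum X N :
  expected_time_partial n w X N = lsum (seq 0 N) (fun t => not_opt_prob n w t X).
Proof.
  unfold expected_time_partial. generalize (seq 0 N). intros l.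
  induction l as [|t l IH]; simpl; auto. unfold lsum in *; simpl; rewrite IH; auto.
Qed.

(** Unrolling one step: [Σ_{t<N+1} Pr[T>t] = 1 + E[Σ_{t<N} Pr[T>t] from the next tree]],
    so by induction on [N] the partial sums stay below [g]. *)
Lemma expected_time_partial_le N : forall X, over_vars n (leaf_list X) ->
  expected_time_partial n w X N <= g X.
Proof.
  induction N as [|N IH]; intros X HX.
  - rewrite expected_time_partial_lsum. unfold lsum; simpl. apply g_nonneg; auto.
  - rewrite expected_time_partial_lsum, lsum_seq_S.
    destruct (excluded_middle_informative (optimal n w X)) as [Ho|Ho].
    + rewrite not_opt_prob_optimal by auto.
      rewrite (lsum_ext _ _ (fun _ => 0)) by (intros; apply not_opt_prob_optimal; auto).
      rewrite lsum_const. pose proof (g_nonneg X HX). lra.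
    + rewrite not_opt_prob_0 by auto.
      rewrite (lsum_ext _ _ (fun t => lsum (mutate_dist n X)
                 (fun q => fst q * not_opt_prob n w t (select w X (snd q)))))
        by (intros; apply not_opt_prob_S; auto).
      rewrite lsum_swap.
      rewrite (lsum_ext _ _ (fun q => fst q * expected_time_partial n w (select w X (snd q)) N))
        by (intros q _; rewrite expected_time_partial_lsum, <- lsum_scal; reflexivity).
      apply Rle_trans with (1 + expect (mutate_dist n X) (fun Y => g (select w X Y))).
      * apply Rplus_le_compat_l. unfold expect. apply lsum_le. intros q Hq.
        destruct (valid_mutate n n1 X HX q Hq) as [H1 H2]. apply Rmult_le_compat_l; auto.
        apply IH, select_over_vars; auto.
      * pose proof (g_drift X HX Ho). lra.
Qed.

End AdditiveDrift.

(** [g(X) <= 6 C(X) + 15 n ln n + 6 = O(C(X) + n log n)], using [x lnh m <= x ln x + m]. *)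
Lemma potential_le n X : (1 <= n)%nat -> over_vars n (leaf_list X) ->
  potential n X <= 15 * (INR (cplx X) + INR n * ln (INR n) + 1).
Proof.
  intros n1 HX. pose proof (INR_n_ge1 n n1) as Hn.
  assert (Hlnn : 0 <= ln (INR n)) by (apply ln_ge0; lra).
  assert (Hn_le : INR n <= INR n * ln (INR n) + 1).
  { pose proof (lnh_bound (INR n) 1 Hn) as H. rewrite lnh_S in H. simpl INR in H. rewrite ln_1 in H. lra. }
  assert (Hb : INR (nlit X - nexpr X) <= INR (cplx X))
    by (apply le_INR; rewrite cplx_len; unfold nlit; lia).
  assert (Hk : INR (n - nexpr X) <= INR n) by (apply le_INR; lia).
  pose proof (lnh_bound (INR n) (nlit X - nexpr X) Hn).
  pose proof (lnh_bound (INR n) (n - nexpr X) Hn).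
  pose proof (pos_INR (nlit X - nexpr X)).
  unfold potential, F, G. lra.
Qed.

Theorem theorem2 :
  exists c : R, 0 < c /\
    forall (n : nat) (w : nat -> R) (X0 : stree),
      (1 <= n)%nat -> weights_ok n w -> wf n X0 ->
      forall N : nat,
        expected_time_partial n w X0 N
          <= c * (INR (cplx X0) + INR n * ln (INR n) + 1).
Proof.
  exists 15. split; [lra|]. intros n w X0 n1 [_ wpos] HX0 N.
  apply Rle_trans with (potential n X0).
  - apply (expected_time_partial_le n n1 w (potential n)); auto.
    + intros X _. apply potential_nonneg; auto.
    + apply potential_drift; auto.
  - apply potential_le; auto.
Qed.
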